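(* In the setting below, if $\eta \geq \eta_0$, then $|\tilde{w}_t| \leq \eta$ for all integers $0 \le t < \tau$.
   Context: Dimension $d=2$. Data $x_1,\dots,x_n\in\mathbb{R}^2$ with $\|x_i\|\le 1$, linearly separable (some $w$ has $\langle w,x_i\rangle>0$ for all $i$). $F(w) = \frac{1}{n}\sum_{i=1}^n \log(1+\exp(-\langle w, x_i\rangle))$. Maximum margin $\gamma = \max_{\|w\|=1}\min_i \langle w, x_i\rangle$ with maximizer the unit vector $w_*$; $v_*$ is a fixed unit vector orthogonal to $w_*$. Gradient descent: $w_0=0$, $w_{t+1} = w_t - \eta\nabla F(w_t)$ with constant $\eta>0$. $\tilde{w}_t = \langle w_t, v_*\rangle$. $\tau = \min\{t\ge 0: F(w_t)\le 1/(8\eta)\}$. $\eta_0 = \max(n, \frac{32}{\gamma^2}\log\frac{256}{\gamma^2})$. *)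

From Stdlib Require Import Reals Lra.
Open Scope R_scope.

Definition vec2 := (R * R)%type.
Definition dot (u v : vec2) : R := fst u * fst v + snd u * snd v.
Definition vnorm (u : vec2) : R := sqrt (dot u u).
Definition vsub (u v : vec2) : vec2 := (fst u - fst v, snd u - snd v).
Definition vscale (a : R) (u : vec2) : vec2 := (a * fst u, a * snd u).
Definition vzero : vec2 := (0, 0).

Fixpoint rsum (n : nat) (f : nat -> R) : R :=
  match n with O => 0 | S k => rsum k f + f k end.

Definition logistic_risk (n : nat) (x : nat -> vec2) (w : vec2) : R :=
  / INR n * rsum n (fun i => ln (1 + exp (- dot w (x i)))).

Definition is_gradient (F : vec2 -> R) (g : vec2 -> vec2) : Prop :=
  forall w : vec2,
    derivable_pt_lim (fun a => F (a, snd w)) (fst w) (fst (g w)) /\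
    derivable_pt_lim (fun b => F (fst w, b)) (snd w) (snd (g w)).

Definition is_min_margin (n : nat) (x : nat -> vec2) (w : vec2) (gamma : R) : Prop :=
  (forall i, (i < n)%nat -> gamma <= dot w (x i)) /\
  (exists i, (i < n)%nat /\ dot w (x i) = gamma).

Definition is_max_margin (n : nat) (x : nat -> vec2) (wstar : vec2) (gamma : R) : Prop :=
  vnorm wstar = 1 /\ is_min_margin n x wstar gamma /\
  (forall w g, vnorm w = 1 -> is_min_margin n x w g -> g <= gamma).

From Stdlib Require Import Reals Lra Lia Classical.
From Coquelicot Require Import Coquelicot.
Open Scope R_scope.

(* Write w_t = a_t w* + b_t v* and K = 32/γ². The pair (a_t, b_t) stays in the region
   γ|b| <= a, |b| <= η - 1 - K exp(-γ a), hence |b_t| < η.  While F(w_t) > 1/(8η) the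
   mean logistic weight is at least 1/(16η), so each step raises a_t by at least γ/16
   and moves b_t by at most γ^-1 times as much (margins along w* are >= γ, |<x_i,v*>| <= 1).
   Samples pushing b_t up have weight at most 1/2, and at most exp(-γ a_t)/(2 b_t) when
   b_t > 0.  For b_t < η/2 this keeps b_{t+1} <= η - 2, within the region because
   γ|b| <= a makes K exp(-γ a) <= 1 once b >= η/2; for b_t >= η/2 the increase of b_t is
   at most exp(-γ a_t), absorbed by the decrease of K exp(-γ a) as a grows by γ/16. *)

Lemma rsum_ext n f g : (forall i, (i < n)%nat -> f i = g i) -> rsum n f = rsum n g.
Proof.
  induction n as [|n IH]; intros Hfg; simpl; [reflexivity|].
  rewrite IH, Hfg; [reflexivity|lia|intros; apply Hfg; lia].
Qed.

Lemma rsum_plus n f g : rsum n (fun i => f i + g i) = rsum n f + rsum n g.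
Proof. induction n as [|n IH]; simpl; [lra|]. rewrite IH; ring. Qed.

Lemma rsum_scal n c f : rsum n (fun i => c * f i) = c * rsum n f.
Proof. induction n as [|n IH]; simpl; [ring|]. rewrite IH; ring. Qed.

Lemma rsum_le n f g : (forall i, (i < n)%nat -> f i <= g i) -> rsum n f <= rsum n g.
Proof.
  induction n as [|n IH]; intros Hfg; simpl; [lra|].
  pose proof (Hfg n (Nat.lt_succ_diag_r n)).
  enough (rsum n f <= rsum n g) by lra.
  apply IH; intros; apply Hfg; lia.
Qed.

Lemma rsum_const n c : rsum n (fun _ => c) = INR n * c.
Proof. induction n as [|n IH]; simpl rsum; [simpl; ring|]. rewrite IH, S_INR; ring. Qed.

Lemma rsum_ge_term n f j :
  (forall i, (i < n)%nat -> 0 <= f i) -> (j < n)%nat -> f j <= rsum n f.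
Proof.
  induction n as [|n IH]; intros Hf Hj; simpl; [lia|].
  assert (Hn : 0 <= f n) by (apply Hf; lia).
  destruct (Nat.eq_dec j n) as [->|Hjn].
  - enough (0 <= rsum n f) by lra.
    rewrite <- (Rmult_0_r (INR n)), <- rsum_const.
    apply rsum_le; intros; apply Hf; lia.
  - enough (f j <= rsum n f) by lra.
    apply IH; [intros; apply Hf|]; lia.
Qed.

Lemma is_derive_rsum n (f : nat -> R -> R) (df : nat -> R) y :
  (forall i, (i < n)%nat -> is_derive (f i) y (df i)) ->
  is_derive (fun y => rsum n (fun i => f i y)) y (rsum n df).
Proof.
  induction n as [|n IH]; intros Hf; simpl.
  - apply (is_derive_const 0).
  - apply (is_derive_plus (fun y => rsum n (fun i => f i y))).
    + apply IH; intros; apply Hf; lia.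
    + apply Hf; lia.
Qed.

Definition mean (n : nat) (f : nat -> R) : R := / INR n * rsum n f.

Lemma mean_ext n f g : (forall i, (i < n)%nat -> f i = g i) -> mean n f = mean n g.
Proof. intros Hfg; unfold mean; rewrite (rsum_ext n f g Hfg); reflexivity. Qed.

Lemma mean_plus n f g : mean n (fun i => f i + g i) = mean n f + mean n g.
Proof. unfold mean; rewrite rsum_plus; ring. Qed.

Lemma mean_scal n c f : mean n (fun i => c * f i) = c * mean n f.
Proof. unfold mean; rewrite rsum_scal; ring. Qed.

Lemma mean_opp n f : mean n (fun i => - f i) = - mean n f.
Proof.
  rewrite <- (Rmult_1_l (mean n f)), Ropp_mult_distr_l, <- mean_scal.
  apply mean_ext; intros; ring.
Qed.

Lemma mean_le n f g : (forall i, (i < n)%nat -> f i <= g i) -> mean n f <= mean n g.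
Proof.
  intros Hfg; unfold mean.
  apply Rmult_le_compat_l; [|apply rsum_le; exact Hfg].
  destruct n as [|n]; [simpl; rewrite Rinv_0; lra|].
  apply Rlt_le, Rinv_0_lt_compat, lt_0_INR; lia.
Qed.

Lemma mean_const n c : (0 < n)%nat -> mean n (fun _ => c) = c.
Proof.
  intros Hn; unfold mean; rewrite rsum_const.
  field; apply not_0_INR; lia.
Qed.

Lemma mean_le_const n f c :
  (0 < n)%nat -> (forall i, (i < n)%nat -> f i <= c) -> mean n f <= c.
Proof. intros Hn Hf; rewrite <- (mean_const n c Hn); apply mean_le, Hf. Qed.

Lemma exp_le x y : x <= y -> exp x <= exp y.
Proof. intros [Hxy|Hxy]; [apply Rlt_le, exp_increasing, Hxy|subst; apply Rle_refl]. Qed.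

Lemma two_mul_le_exp y : 2 * y <= exp y.
Proof.
  destruct (Rle_lt_dec y 0) as [Hy|Hy]; [pose proof (exp_pos y); lra|].
  replace y with (1 + (y - 1)) at 2 by ring; rewrite exp_plus.
  assert (He : 2 <= exp 1) by (pose proof (exp_ineq1_le 1); lra).
  assert (Hy1 : y <= exp (y - 1)) by (pose proof (exp_ineq1_le (y - 1)); lra).
  nra.
Qed.

Definition logistic_loss (z : R) : R := ln (1 + exp (- z)).

Definition neg_dloss (z : R) : R := / (1 + exp z).

Lemma is_derive_logistic_loss z : is_derive logistic_loss z (- neg_dloss z).
Proof.
  unfold logistic_loss, neg_dloss; auto_derive.
  - pose proof (exp_pos (- z)); lra.
  - rewrite exp_Ropp; pose proof (exp_pos z); field; lra.
Qed.

Lemma neg_dloss_pos z : 0 < neg_dloss z.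
Proof. apply Rinv_0_lt_compat; pose proof (exp_pos z); lra. Qed.

Lemma neg_dloss_le_exp z : neg_dloss z <= exp (- z).
Proof.
  unfold neg_dloss; rewrite exp_Ropp; pose proof (exp_pos z).
  apply Rinv_le_contravar; lra.
Qed.

Lemma neg_dloss_anti z1 z2 : z1 <= z2 -> neg_dloss z2 <= neg_dloss z1.
Proof.
  intros Hz; unfold neg_dloss; pose proof (exp_pos z1).
  apply Rinv_le_contravar; [lra|].
  apply Rplus_le_compat_l, exp_le, Hz.
Qed.

Lemma neg_dloss_0 : neg_dloss 0 = / 2.
Proof. unfold neg_dloss; rewrite exp_0; f_equal; ring. Qed.

Lemma neg_dloss_le_half z : 0 <= z -> neg_dloss z <= / 2.
Proof. rewrite <- neg_dloss_0; apply neg_dloss_anti. Qed.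

Lemma neg_dloss_ge_half z : z <= 0 -> / 2 <= neg_dloss z.
Proof. rewrite <- neg_dloss_0; apply neg_dloss_anti. Qed.

Lemma logistic_loss_le_2_neg_dloss z : 0 <= z -> logistic_loss z <= 2 * neg_dloss z.
Proof.
  intros Hz; unfold logistic_loss, neg_dloss.
  assert (Hexp : 1 <= exp z) by (rewrite <- exp_0; apply exp_le; lra).
  apply Rle_trans with (exp (- z)).
  - rewrite <- (ln_exp (exp (- z))) at 2.
    apply ln_le; [pose proof (exp_pos (- z)); lra|apply exp_ineq1_le].
  - rewrite exp_Ropp; apply Rmult_le_reg_r with (exp z * (1 + exp z)); [nra|].
    field_simplify; lra.
Qed.

Lemma mean_neg_dloss_ge n eta (z : nat -> R) :
  (0 < n)%nat -> INR n <= eta ->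
  / (8 * eta) < mean n (fun i => logistic_loss (z i)) ->
  / (16 * eta) <= mean n (fun i => neg_dloss (z i)).
Proof.
  intros Hn Hne Hloss.
  assert (Hn0 : 0 < INR n) by (apply lt_0_INR; exact Hn).
  destruct (classic (exists j, (j < n)%nat /\ z j < 0)) as [[j [Hj Hzj]]|Hnonneg].
  - (* one misclassified sample already carries weight at least 1/2 *)
    apply Rle_trans with (/ INR n * / 2).
    + rewrite <- Rinv_mult; apply Rinv_le_contravar; lra.
    + apply Rmult_le_compat_l; [apply Rlt_le, Rinv_0_lt_compat; exact Hn0|].
      apply Rle_trans with (neg_dloss (z j)); [apply neg_dloss_ge_half; lra|].
      apply (rsum_ge_term n (fun i => neg_dloss (z i))); [intros; apply Rlt_le, neg_dloss_pos|exact Hj].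
  - apply Rle_trans with (/ 2 * mean n (fun i => logistic_loss (z i))).
    + replace (/ (16 * eta)) with (/ 2 * / (8 * eta)) by (field; lra); lra.
    + rewrite <- mean_scal; apply mean_le; intros i Hi.
      assert (0 <= z i) by (apply Rnot_lt_le; intros Hzi; apply Hnonneg; eauto).
      pose proof (logistic_loss_le_2_neg_dloss (z i)); lra.
Qed.

Lemma is_derive_mean_logistic_loss n (f : nat -> R -> R) (df : nat -> R) y :
  (forall i, (i < n)%nat -> is_derive (f i) y (df i)) ->
  is_derive (fun y => mean n (fun i => logistic_loss (f i y))) y
    (- mean n (fun i => neg_dloss (f i y) * df i)).
Proof.
  intros Hf; rewrite <- mean_opp; unfold mean.
  apply (is_derive_scal (fun y => rsum n (fun i => logistic_loss (f i y)))).
  replace (rsum n (fun i => - (neg_dloss (f i y) * df i)))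
    with (rsum n (fun i => scal (df i) (- neg_dloss (f i y))))
    by (apply rsum_ext; intros; unfold scal; simpl; unfold mult; simpl; ring).
  apply is_derive_rsum; intros i Hi.
  apply (is_derive_comp logistic_loss (f i)); [apply is_derive_logistic_loss|apply Hf, Hi].
Qed.

Lemma logistic_risk_grad n x grad (Hgrad : is_gradient (logistic_risk n x) grad) u :
  grad u = (- mean n (fun i => neg_dloss (dot u (x i)) * fst (x i)),
            - mean n (fun i => neg_dloss (dot u (x i)) * snd (x i))).
Proof.
  destruct (Hgrad u) as [Hfst Hsnd].
  rewrite (surjective_pairing (grad u)); f_equal;
    [apply (uniqueness_limite _ _ _ _ Hfst)|apply (uniqueness_limite _ _ _ _ Hsnd)];
    apply is_derive_Reals.
  - apply (is_derive_mean_logistic_loss n (fun i a => dot (a, snd u) (x i))).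
    intros i _; unfold dot; simpl; auto_derive; [exact I|ring].
  - apply (is_derive_mean_logistic_loss n (fun i b => dot (fst u, b) (x i))).
    intros i _; unfold dot; simpl; auto_derive; [exact I|ring].
Qed.

Lemma gd_step_dot n x grad (Hgrad : is_gradient (logistic_risk n x) grad) eta u y :
  dot (vsub u (vscale eta (grad u))) y
  = dot u y + eta * mean n (fun i => neg_dloss (dot u (x i)) * dot y (x i)).
Proof.
  rewrite (logistic_risk_grad n x grad Hgrad).
  rewrite (mean_ext n (fun i => _ * dot y (x i)) (fun i =>
    fst y * (neg_dloss (dot u (x i)) * fst (x i)) + snd y * (neg_dloss (dot u (x i)) * snd (x i))))
    by (intros; unfold dot; ring).
  rewrite mean_plus, !mean_scal.
  set (m1 := mean n (fun i => _ * fst (x i))); set (m2 := mean n (fun i => _ * snd (x i))).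
  unfold dot, vsub, vscale; simpl; ring.
Qed.

Lemma dot_comm u v : dot u v = dot v u.
Proof. unfold dot; ring. Qed.

Lemma dot_self_nonneg u : 0 <= dot u u.
Proof. unfold dot; nra. Qed.

Lemma vnorm_eq_1 u : vnorm u = 1 -> dot u u = 1.
Proof.
  unfold vnorm; intros Hu.
  rewrite <- (sqrt_sqrt (dot u u)), Hu by apply dot_self_nonneg; ring.
Qed.

Lemma vnorm_le_1 u : vnorm u <= 1 -> dot u u <= 1.
Proof.
  unfold vnorm; intros Hu; pose proof (sqrt_pos (dot u u)).
  rewrite <- (sqrt_sqrt (dot u u)) by apply dot_self_nonneg; nra.
Qed.

Lemma dot_sq_le u v : dot u v ^ 2 <= dot u u * dot v v.
Proof.
  unfold dot.
  (* Lagrange's identity *)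
  assert (0 <= (fst u * snd v - snd u * fst v) ^ 2) by apply pow2_ge_0; nra.
Qed.

Lemma Rabs_dot_le_1 u v : dot u u <= 1 -> dot v v <= 1 -> Rabs (dot u v) <= 1.
Proof.
  intros Hu Hv; pose proof (dot_sq_le u v).
  pose proof (dot_self_nonneg u); pose proof (dot_self_nonneg v).
  apply Rabs_le; split; nra.
Qed.

Lemma dot_orthonormal_expand W V :
  dot W W = 1 -> dot V V = 1 -> dot V W = 0 ->
  forall u y, dot u y = dot u W * dot W y + dot u V * dot V y.
Proof.
  destruct W as [p q], V as [r s]; unfold dot; simpl; intros HW HV HVW u y.
  (* in the plane, a unit vector orthogonal to (p, q) is l * (- q, p) with l = +-1 *)
  set (l := p * s - q * r).
  assert (Hr : r = - l * q).
  { assert (E : r + l * q = p * (r * p + s * q) - r * (p * p + q * q - 1)) by (unfold l; ring).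
    rewrite HVW, HW in E; lra. }
  assert (Hs : s = l * p).
  { assert (E : s - l * p = q * (r * p + s * q) - s * (p * p + q * q - 1)) by (unfold l; ring).
    rewrite HVW, HW in E; lra. }
  assert (Hl : l * l = 1) by (rewrite Hr, Hs in HV; nra).
  rewrite Hr, Hs.
  transitivity ((fst u * fst y + snd u * snd y) * (p * p + q * q)); [rewrite HW; ring|].
  transitivity ((fst u * p + snd u * q) * (p * fst y + q * snd y)
    + (l * l) * ((fst u * - q + snd u * p) * (- q * fst y + p * snd y))); [rewrite Hl; ring|ring].
Qed.

Lemma exists_min_upto (f : nat -> R) n :
  (0 < n)%nat -> exists m, (forall i, (i < n)%nat -> m <= f i) /\ (exists i, (i < n)%nat /\ f i = m).
Proof.
  induction n as [|n IH]; intros Hn; [lia|].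
  destruct (Nat.eq_dec n 0) as [->|Hn0].
  - exists (f 0%nat); split; [intros i Hi; replace i with 0%nat by lia; lra|eauto].
  - destruct IH as [m [Hm [j [Hj Hfj]]]]; [lia|].
    destruct (Rle_dec m (f n)) as [Hle|Hgt].
    + exists m; split; [|exists j; split; [lia|exact Hfj]].
      intros i Hi; destruct (Nat.eq_dec i n) as [->|Hin]; [exact Hle|apply Hm; lia].
    + exists (f n); split; [|exists n; split; [lia|reflexivity]].
      intros i Hi; destruct (Nat.eq_dec i n) as [->|Hin]; [lra|].
      specialize (Hm i ltac:(lia)); lra.
Qed.

Lemma max_margin_pos n x wstar gamma :
  (0 < n)%nat -> (exists u : vec2, forall i, (i < n)%nat -> dot u (x i) > 0) ->
  is_max_margin n x wstar gamma -> 0 < gamma.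
Proof.
  intros Hn [u Hu] [_ [_ Hopt]].
  assert (Huu : 0 < dot u u).
  { destruct (dot_self_nonneg u) as [Hpos|Hz]; [exact Hpos|exfalso].
    pose proof (dot_sq_le u (x 0%nat)); pose proof (Hu 0%nat Hn); rewrite <- Hz in *; nra. }
  set (N := vnorm u).
  assert (HN : 0 < N) by (apply sqrt_lt_R0, Huu).
  assert (HNN : N * N = dot u u) by (apply sqrt_sqrt; lra).
  set (u1 := vscale (/ N) u).
  assert (Hdot : forall y, dot u1 y = / N * dot u y) by (intros; unfold u1, vscale, dot; simpl; ring).
  assert (Hu1 : vnorm u1 = 1).
  { unfold vnorm; rewrite Hdot, dot_comm, Hdot, <- HNN, <- sqrt_1; f_equal; field; lra. }
  destruct (exists_min_upto (fun i => dot u1 (x i)) n Hn) as [m [Hm [j [Hj Hmj]]]].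
  apply Rlt_le_trans with m.
  - rewrite <- Hmj, Hdot; apply Rmult_lt_0_compat; [apply Rinv_0_lt_compat, HN|apply Hu, Hj].
  - apply (Hopt u1 m Hu1); split; [exact Hm|exists j; auto].
Qed.

Lemma max_margin_le_1 n x wstar gamma :
  (forall i, (i < n)%nat -> vnorm (x i) <= 1) -> is_max_margin n x wstar gamma -> gamma <= 1.
Proof.
  intros Hx [Hw [[_ [i [Hi <-]]] _]].
  pose proof (Rabs_dot_le_1 wstar (x i) (Req_le _ _ (vnorm_eq_1 _ Hw)) (vnorm_le_1 _ (Hx i Hi)))
    as Habs.
  apply Rabs_le_between in Habs; lra.
Qed.

Lemma neg_dloss_mul_le_of_neg al be a b :
  0 <= al -> 0 <= a -> Rabs be <= 1 -> b < 0 ->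
  neg_dloss (al * a + be * b) * be <= neg_dloss b.
Proof.
  intros Hal Ha Hbe Hb; apply Rabs_le_between in Hbe.
  pose proof (neg_dloss_pos b); pose proof (neg_dloss_pos (al * a + be * b)).
  destruct (Rle_lt_dec be 0) as [Hneg|Hpos]; [nra|].
  assert (neg_dloss (al * a + be * b) <= neg_dloss b) by (apply neg_dloss_anti; nra).
  nra.
Qed.

Lemma neg_dloss_mul_le_half al be a b :
  0 <= al -> 0 <= a -> Rabs be <= 1 -> 0 <= b ->
  neg_dloss (al * a + be * b) * be <= / 2.
Proof.
  intros Hal Ha Hbe Hb; apply Rabs_le_between in Hbe.
  pose proof (neg_dloss_pos (al * a + be * b)).
  destruct (Rle_lt_dec be 0) as [Hneg|Hpos]; [nra|].
  assert (neg_dloss (al * a + be * b) <= / 2) by (apply neg_dloss_le_half; nra).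
  nra.
Qed.

Lemma neg_dloss_mul_le_exp gam al be a b :
  0 <= gam <= al -> 0 <= a -> Rabs be <= 1 -> 0 < b ->
  neg_dloss (al * a + be * b) * be <= exp (- (gam * a)) / (2 * b).
Proof.
  intros Hal Ha Hbe Hb; apply Rabs_le_between in Hbe.
  pose proof (neg_dloss_pos (al * a + be * b)); pose proof (exp_pos (- (gam * a))).
  assert (0 <= exp (- (gam * a)) / (2 * b)) by (apply Rlt_le, Rdiv_lt_0_compat; lra).
  destruct (Rle_lt_dec be 0) as [Hneg|Hpos]; [nra|].
  assert (Hz : neg_dloss (al * a + be * b) <= exp (- (gam * a)) * exp (- (be * b))).
  { rewrite <- exp_plus; eapply Rle_trans; [apply neg_dloss_le_exp|apply exp_le; nra]. }
  pose proof (two_mul_le_exp (be * b)).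
  assert (Hbe_exp : be * exp (- (be * b)) <= / (2 * b)).
  { rewrite exp_Ropp; pose proof (exp_pos (be * b)).
    apply Rmult_le_reg_r with (2 * b * exp (be * b)); [nra|].
    field_simplify; lra. }
  pose proof (exp_pos (- (be * b))); unfold Rdiv; nra.
Qed.

Lemma eta0_bounds gam eta :
  0 < gam <= 1 -> 32 / gam ^ 2 * ln (256 / gam ^ 2) <= eta ->
  32 / gam ^ 2 <= eta / 4 /\ 32 / gam ^ 2 <= exp (gam ^ 2 * eta / 2).
Proof.
  intros Hgam Heta.
  assert (Hg2 : 0 < gam ^ 2 <= 1) by (split; [apply pow_lt|simpl]; nra).
  assert (HK : 32 <= 32 / gam ^ 2).
  { apply Rmult_le_reg_r with (gam ^ 2); [lra|]; field_simplify; nra. }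
  assert (HL : 4 <= ln (256 / gam ^ 2)).
  { rewrite <- (ln_exp 4); apply ln_le; [apply exp_pos|].
    (* [exp 4 <= 3 ^ 4 <= 256] *)
    replace 4 with (1 + 1 + 1 + 1) by ring; rewrite !exp_plus.
    pose proof exp_le_3; pose proof (exp_pos 1).
    assert (exp 1 * exp 1 <= 9) by nra.
    apply Rle_trans with 256; [nra|].
    apply Rmult_le_reg_r with (gam ^ 2); [lra|]; field_simplify; nra. }
  split; [nra|].
  apply Rle_trans with (256 / gam ^ 2).
  - apply Rmult_le_compat_r; [apply Rlt_le, Rinv_0_lt_compat|]; lra.
  - rewrite <- (exp_ln (256 / gam ^ 2)) by (apply Rdiv_lt_0_compat; lra).
    apply exp_le.
    replace (ln (256 / gam ^ 2)) with (gam ^ 2 / 32 * (32 / gam ^ 2 * ln (256 / gam ^ 2)))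
      by (field; lra).
    assert (0 <= gam ^ 2 * eta) by (apply Rmult_le_pos; nra).
    apply Rle_trans with (gam ^ 2 / 32 * eta); [apply Rmult_le_compat_l; lra|lra].
Qed.

Section OrthBound.

Variables gam eta : R.
Hypotheses (Hgam : 0 < gam <= 1) (HK : 32 / gam ^ 2 <= eta / 4)
  (HKe : 32 / gam ^ 2 <= exp (gam ^ 2 * eta / 2)).

Definition orth_bound (a : R) : R := eta - 1 - 32 / gam ^ 2 * exp (- (gam * a)).

Lemma orth_bound_lt a : orth_bound a < eta.
Proof.
  unfold orth_bound; pose proof (exp_pos (- (gam * a))).
  assert (0 < 32 / gam ^ 2) by (apply Rdiv_lt_0_compat; [lra|apply pow_lt; lra]).
  nra.
Qed.

Lemma le_32_div_sq : 32 <= 32 / gam ^ 2.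
Proof.
  assert (Hg2 : 0 < gam ^ 2 <= 1) by (split; [apply pow_lt|simpl]; nra).
  apply Rmult_le_reg_r with (gam ^ 2); [lra|]; field_simplify; nra.
Qed.

Lemma eta_ge_128 : 128 <= eta.
Proof. pose proof le_32_div_sq; lra. Qed.

Lemma orth_bound_of_le b a : b <= eta - 2 -> gam * Rabs b <= a -> b <= orth_bound a.
Proof.
  intros Hb Hba; unfold orth_bound; pose proof le_32_div_sq.
  pose proof (Rabs_pos b); assert (Ha : 0 <= a) by nra.
  destruct (Rle_dec b (eta / 2)) as [Hsmall|Hlarge].
  - assert (exp (- (gam * a)) <= 1) by (rewrite <- exp_0; apply exp_le; nra).
    pose proof (exp_pos (- (gam * a))); nra.
  - (* a large [b] forces a large margin component [a >= gam * eta / 2] *)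
    assert (Hexp : exp (- (gam * a)) <= / exp (gam ^ 2 * eta / 2)).
    { rewrite <- exp_Ropp; apply exp_le.
      rewrite Rabs_right in Hba by lra; simpl; nra. }
    assert (32 / gam ^ 2 * / exp (gam ^ 2 * eta / 2) <= 1).
    { pose proof (exp_pos (gam ^ 2 * eta / 2)).
      apply Rmult_le_reg_r with (exp (gam ^ 2 * eta / 2)); [lra|].
      field_simplify; lra. }
    assert (32 / gam ^ 2 * exp (- (gam * a)) <= 32 / gam ^ 2 * / exp (gam ^ 2 * eta / 2))
      by (apply Rmult_le_compat_l; lra).
    lra.
Qed.

Lemma orth_bound_step a b a' b' :
  b <= orth_bound a -> a + gam / 16 <= a' -> b' <= b + exp (- (gam * a)) ->
  b' <= orth_bound a'.
Proof.
  intros Hb Ha' Hb'; unfold orth_bound in *.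
  assert (Hg2 : 0 < gam ^ 2 <= 1) by (split; [apply pow_lt|simpl]; nra).
  set (r := exp (- (gam * (a' - a)))).
  assert (Hr0 : 0 < r) by apply exp_pos.
  assert (Hr : (1 + gam ^ 2 / 16) * r <= 1).
  { unfold r; rewrite exp_Ropp; pose proof (exp_pos (gam * (a' - a))).
    assert (1 + gam ^ 2 / 16 <= exp (gam * (a' - a))).
    { eapply Rle_trans; [apply exp_ineq1_le|apply exp_le]; simpl; nra. }
    apply Rmult_le_reg_r with (exp (gam * (a' - a))); [lra|].
    field_simplify; lra. }
  (* the decrease of the exponential term absorbs the increase of [b] *)
  assert (HKr : 1 + 32 / gam ^ 2 * r <= 32 / gam ^ 2).
  { apply Rmult_le_reg_r with (gam ^ 2); [lra|]; field_simplify; try lra.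
    destruct (Rle_lt_dec r (/ 2)); nra. }
  replace (exp (- (gam * a'))) with (exp (- (gam * a)) * r)
    by (unfold r; rewrite <- exp_plus; f_equal; ring).
  pose proof (exp_pos (- (gam * a))).
  assert (exp (- (gam * a)) * (1 + 32 / gam ^ 2 * r) <= exp (- (gam * a)) * (32 / gam ^ 2))
    by (apply Rmult_le_compat_l; lra).
  lra.
Qed.

Lemma add_mul_neg_dloss_le b : b < 0 -> b + eta * neg_dloss b <= eta - 2.
Proof.
  intros Hb; pose proof eta_ge_128; unfold neg_dloss.
  pose proof (exp_pos b).
  assert (E : eta - eta * / (1 + exp b) = eta * exp b / (1 + exp b)) by (field; lra).
  enough (b + 2 <= eta * exp b / (1 + exp b)) by lra.
  destruct (Rle_lt_dec b (-2)) as [Hb2|Hb2].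
  - assert (0 <= eta * exp b / (1 + exp b)) by (apply Rmult_le_pos; [nra|apply Rlt_le, Rinv_0_lt_compat; lra]).
    lra.
  - (* [exp b >= exp (-2) >= 1/9], so the weight is at least [1/18] *)
    assert (exp 2 <= 9).
    { replace 2 with (1 + 1) by ring; rewrite exp_plus; pose proof exp_le_3; pose proof (exp_pos 1); nra. }
    assert (/ 9 <= exp b).
    { apply Rle_trans with (exp (- (2))); [rewrite exp_Ropp; apply Rinv_le_contravar; [apply exp_pos|lra]|apply exp_le; lra]. }
    assert (exp b <= 1) by (rewrite <- exp_0; apply exp_le; lra).
    apply Rle_trans with (eta / 18); [lra|].
    apply Rmult_le_reg_r with (1 + exp b); [lra|]; field_simplify; nra.
Qed.

Variables (n : nat) (al : nat -> R).
Hypotheses (Hn : (0 < n)%nat) (Hal : forall i, (i < n)%nat -> gam <= al i).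

Lemma gd_orth_le_orth_bound (be s : nat -> R) a b :
  (forall i, (i < n)%nat -> Rabs (be i) <= 1) ->
  (forall i, (i < n)%nat -> s i = neg_dloss (al i * a + be i * b)) ->
  gam * Rabs b <= a -> b <= orth_bound a ->
  gam / 16 <= eta * mean n (fun i => s i * al i) ->
  gam * Rabs (b + eta * mean n (fun i => s i * be i)) <= a + eta * mean n (fun i => s i * al i) ->
  b + eta * mean n (fun i => s i * be i) <= orth_bound (a + eta * mean n (fun i => s i * al i)).
Proof.
  intros Hbe Hs Hcone Hb Hinc Hcone'.
  set (a' := a + _) in *; set (b' := b + _) in *.
  pose proof eta_ge_128 as Heta; pose proof (Rabs_pos b).
  assert (Ha : 0 <= a) by nra.
  assert (Hal0 : forall i, (i < n)%nat -> 0 <= al i) by (intros i Hi; pose proof (Hal i Hi); lra).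
  assert (Hterm : forall U, (forall i, (i < n)%nat -> s i * be i <= U) -> b' <= b + eta * U).
  { intros U HU; pose proof (mean_le_const n _ U Hn HU); unfold b'; nra. }
  destruct (Rlt_le_dec b 0) as [Hneg|Hnonneg].
  - apply orth_bound_of_le; [|exact Hcone'].
    pose proof (add_mul_neg_dloss_le b Hneg).
    enough (b' <= b + eta * neg_dloss b) by lra.
    apply Hterm; intros i Hi; rewrite Hs by exact Hi.
    apply neg_dloss_mul_le_of_neg; auto.
  - destruct (Rle_lt_dec b (eta / 2 - 2)) as [Hmid|Hlarge].
    + apply orth_bound_of_le; [|exact Hcone'].
      enough (b' <= b + eta * / 2) by lra.
      apply Hterm; intros i Hi; rewrite Hs by exact Hi.
      apply neg_dloss_mul_le_half; auto.
    + set (E := exp (- (gam * a))).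
      assert (HE : 0 < E <= 1) by (split; [apply exp_pos|rewrite <- exp_0; apply exp_le; nra]).
      assert (Hb'E : b' <= b + E * (eta / (2 * b))).
      { replace (E * (eta / (2 * b))) with (eta * (E / (2 * b))) by (field; lra).
        apply Hterm; intros i Hi; rewrite Hs by exact Hi.
        apply neg_dloss_mul_le_exp; [split; [lra|apply Hal, Hi]|exact Ha|apply Hbe, Hi|lra]. }
      assert (0 < eta / (2 * b)) by (apply Rdiv_lt_0_compat; lra).
      destruct (Rle_lt_dec b (eta / 2)) as [Hhalf|Hhuge].
      * apply orth_bound_of_le; [|exact Hcone'].
        assert (eta / (2 * b) <= 2) by (apply Rmult_le_reg_r with (2 * b); [lra|]; field_simplify; lra).
        assert (E * (eta / (2 * b)) <= 2) by (apply Rle_trans with (1 * 2); [apply Rmult_le_compat; lra|lra]).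
        lra.
      * apply (orth_bound_step a b); [exact Hb|unfold a'; lra|fold E].
        assert (eta / (2 * b) <= 1) by (apply Rmult_le_reg_r with (2 * b); [lra|]; field_simplify; lra).
        assert (E * (eta / (2 * b)) <= E) by (rewrite <- (Rmult_1_r E) at 2; apply Rmult_le_compat_l; lra).
        lra.
Qed.

Variable be : nat -> R.
Hypothesis Hbe : forall i, (i < n)%nat -> Rabs (be i) <= 1.

Lemma gd_cone (s : nat -> R) a b :
  (forall i, (i < n)%nat -> 0 < s i) -> gam * Rabs b <= a ->
  gam * Rabs (b + eta * mean n (fun i => s i * be i)) <= a + eta * mean n (fun i => s i * al i).
Proof.
  intros Hs Hcone; pose proof eta_ge_128.
  assert (Hsbe : Rabs (mean n (fun i => s i * be i)) <= mean n s).
  { apply Rabs_le; split; [rewrite <- mean_opp|]; apply mean_le; intros i Hi;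
      pose proof (Hs i Hi); pose proof (Hbe i Hi) as Hb; apply Rabs_le_between in Hb; nra. }
  assert (Hsal : gam * mean n s <= mean n (fun i => s i * al i)).
  { rewrite <- mean_scal; apply mean_le; intros i Hi; pose proof (Hs i Hi); pose proof (Hal i Hi); nra. }
  pose proof (Rabs_triang b (eta * mean n (fun i => s i * be i))) as Htri.
  rewrite Rabs_mult, (Rabs_right eta) in Htri by lra.
  apply Rle_trans with (gam * Rabs b + eta * (gam * Rabs (mean n (fun i => s i * be i)))).
  - apply Rmult_le_compat_l with (r := gam) in Htri; lra.
  - apply Rplus_le_compat; [exact Hcone|apply Rmult_le_compat_l; [lra|]].
    apply Rle_trans with (gam * mean n s); [apply Rmult_le_compat_l|]; lra.
Qed.

Definition orth_invariant (a b : R) : Prop := gam * Rabs b <= a /\ Rabs b <= orth_bound a.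

Lemma orth_invariant_0 : orth_invariant 0 0.
Proof.
  pose proof eta_ge_128; unfold orth_invariant, orth_bound.
  rewrite Rabs_R0, Rmult_0_r, Ropp_0, exp_0; lra.
Qed.

Lemma gd_margin_increment (s : nat -> R) :
  (forall i, (i < n)%nat -> 0 < s i) -> / (16 * eta) <= mean n s ->
  gam / 16 <= eta * mean n (fun i => s i * al i).
Proof.
  intros Hs Hmean; pose proof eta_ge_128.
  apply Rle_trans with (eta * (gam * mean n s)).
  - replace (gam / 16) with (eta * (gam * / (16 * eta))) by (field; lra).
    apply Rmult_le_compat_l; [|apply Rmult_le_compat_l]; lra.
  - apply Rmult_le_compat_l; [lra|]; rewrite <- mean_scal; apply mean_le.
    intros i Hi; pose proof (Hs i Hi); pose proof (Hal i Hi); nra.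
Qed.

Lemma orth_invariant_gd_step (s : nat -> R) a b :
  (forall i, (i < n)%nat -> s i = neg_dloss (al i * a + be i * b)) ->
  / (16 * eta) <= mean n s -> orth_invariant a b ->
  orth_invariant (a + eta * mean n (fun i => s i * al i)) (b + eta * mean n (fun i => s i * be i)).
Proof.
  intros Hs Hmean [Hcone Hb].
  assert (Hpos : forall i, (i < n)%nat -> 0 < s i)
    by (intros i Hi; rewrite Hs by exact Hi; apply neg_dloss_pos).
  pose proof (gd_margin_increment s Hpos Hmean) as Hinc.
  pose proof (gd_cone s a b Hpos Hcone) as Hcone'.
  apply Rabs_le_between in Hb.
  split; [exact Hcone'|apply Rabs_le; split].
  - (* the lower bound is the upper bound for the mirrored data [(- be, - b)] *)
    assert (Hmirror : mean n (fun i => s i * - be i) = - mean n (fun i => s i * be i))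
      by (rewrite <- mean_opp; apply mean_ext; intros; ring).
    enough (- b + eta * mean n (fun i => s i * - be i)
            <= orth_bound (a + eta * mean n (fun i => s i * al i)))
      by (rewrite Hmirror in *; lra).
    apply gd_orth_le_orth_bound; try lra.
    + intros i Hi; rewrite Rabs_Ropp; apply Hbe, Hi.
    + intros i Hi; rewrite Hs by exact Hi; f_equal; ring.
    + rewrite Rabs_Ropp; exact Hcone.
    + rewrite Hmirror, Ropp_mult_distr_r_reverse, <- Ropp_plus_distr, Rabs_Ropp; exact Hcone'.
  - apply gd_orth_le_orth_bound; auto; lra.
Qed.

End OrthBound.

Theorem lemma6
  (n : nat) (x : nat -> vec2)
  (Hn : (0 < n)%nat)
  (Hx : forall i, (i < n)%nat -> vnorm (x i) <= 1)
  (Hsep : exists u : vec2, forall i, (i < n)%nat -> dot u (x i) > 0)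
  (gamma : R) (wstar vstar : vec2)
  (Hmax : is_max_margin n x wstar gamma)
  (Hv1 : vnorm vstar = 1) (Hvorth : dot vstar wstar = 0)
  (grad : vec2 -> vec2) (Hgrad : is_gradient (logistic_risk n x) grad)
  (eta : R) (Heta_pos : 0 < eta)
  (w : nat -> vec2)
  (Hw0 : w O = vzero)
  (HwS : forall t, w (S t) = vsub (w t) (vscale eta (grad (w t))))
  (Heta : Rmax (INR n) (32 / gamma ^ 2 * ln (256 / gamma ^ 2)) <= eta) :
  forall t : nat,
    (* t < tau, where tau = min { s : F(w_s) <= 1/(8 eta) } (possibly infinite) *)
    (forall s, (s <= t)%nat -> logistic_risk n x (w s) > / (8 * eta)) ->
    Rabs (dot (w t) vstar) <= eta.
Proof.
  intros t Hrisk.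
  assert (Hgam : 0 < gamma <= 1)
    by (split; [eapply max_margin_pos|eapply max_margin_le_1]; eassumption).
  destruct (eta0_bounds gamma eta Hgam (Rle_trans _ _ _ (Rmax_r _ _) Heta)) as [HK HKe].
  destruct Hmax as [Hw1 [[Hmargin _] _]].
  pose proof (vnorm_eq_1 _ Hv1) as Hvv.
  pose proof (dot_orthonormal_expand wstar vstar (vnorm_eq_1 _ Hw1) Hvv Hvorth) as Hexpand.
  assert (Hbe : forall i, (i < n)%nat -> Rabs (dot vstar (x i)) <= 1)
    by (intros i Hi; apply Rabs_dot_le_1; [lra|apply vnorm_le_1, Hx, Hi]).
  assert (Hinv : forall s, (s <= t)%nat -> orth_invariant gamma eta (dot (w s) wstar) (dot (w s) vstar)).
  { induction s as [|s IH]; intros Hs.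
    - rewrite Hw0; replace (dot vzero wstar) with 0 by (unfold dot; simpl; ring).
      replace (dot vzero vstar) with 0 by (unfold dot; simpl; ring).
      apply orth_invariant_0; assumption.
    - rewrite HwS, !(gd_step_dot n x grad Hgrad).
      apply (orth_invariant_gd_step gamma eta Hgam HK HKe n _ Hn Hmargin _ Hbe).
      + intros i _; f_equal; rewrite Hexpand; ring.
      + apply mean_neg_dloss_ge; [exact Hn|eapply Rle_trans; [apply Rmax_l|exact Heta]|].
        apply Hrisk; lia.
      + apply IH; lia. }
  destruct (Hinv t (Nat.le_refl t)) as [_ Hb].
  pose proof (orth_bound_lt gamma eta Hgam (dot (w t) wstar)); lra.
Qed.
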